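(* Let $m\ge3$ be odd and $n\ge2$. Every completely positive tensor $\mathcal{A}\in S_{m,n}$ is a strongly SOS tensor.
   Context: $S_{m,n}$ is the set of real symmetric $m$th order $n$-dimensional tensors. For $\mathbf{u}\in\mathbb{R}^n$, $\mathbf{u}^m$ is the tensor with entries $u_{i_1}\cdots u_{i_m}$. A tensor is completely positive if it equals $\sum_{l=1}^r(\mathbf{u}^{(l)})^m$ for some positive integer $r$ and nonnegative vectors $\mathbf{u}^{(l)}\in\mathbb{R}^n$. For $\mathbf{x}\in\mathbb{R}^n$ let $F_i(\mathbf{x})=\sum_{i_2,\dots,i_m=1}^n a_{ii_2\dots i_m}x_{i_2}\cdots x_{i_m}$. For odd $m$, $\mathcal{A}\in S_{m,n}$ is a strongly SOS tensor if each $F_i$, $i=1,\dots,n$, is a sum of squares of real polynomials. *)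

From HB Require Import structures.
From mathcomp Require Import all_boot all_order all_algebra.
From mathcomp Require Import mpoly.
Set Implicit Arguments. Unset Strict Implicit. Unset Printing Implicit Defensive.
Import Order.TTheory GRing.Theory Num.Theory.
Local Open Scope ring_scope.

Definition tensor (R : Type) (m n : nat) := m.-tuple 'I_n -> R.

Definition symmetric_tensor (R : Type) (m n : nat) (A : tensor R m n) : Prop :=
  forall t t' : m.-tuple 'I_n, perm_eq t t' -> A t = A t'.

Definition rank_one (R : comNzRingType) (m n : nat) (u : 'I_n -> R) : tensor R m n :=
  fun t => \prod_(j <- t) u j.

Definition completely_positive (R : realDomainType) (m n : nat)
    (A : tensor R m n) : Prop :=
  exists (r : nat) (u : 'I_r -> 'I_n -> R),
    (0 < r)%N /\ (forall l j, 0 <= u l j) /\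
    (forall t, A t = \sum_(l < r) @rank_one R m n (u l) t).

(* F_i(x) = sum_{i_2..i_m} a_{i i_2 ... i_m} x_{i_2} ... x_{i_m}:
   sum over index tuples whose first entry is i (the [head i t] default is
   irrelevant since m >= 1 in use), monomial over the remaining entries. *)
Definition Fpoly (R : comNzRingType) (m n : nat) (A : tensor R m n) (i : 'I_n)
    : {mpoly R[n]} :=
  \sum_(t : m.-tuple 'I_n | head i t == i) A t *: \prod_(j <- behead t) 'X_j.

Definition is_sos (R : comNzRingType) (n : nat) (p : {mpoly R[n]}) : Prop :=
  exists s : seq {mpoly R[n]}, p = \sum_(q <- s) q ^+ 2.

Definition strongly_sos (R : comNzRingType) (m n : nat) (A : tensor R m n) : Prop :=
  forall i : 'I_n, is_sos (Fpoly A i).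

From HB Require Import structures.
From mathcomp Require Import all_boot all_order all_algebra.
From mathcomp Require Import mpoly.
Set Implicit Arguments. Unset Strict Implicit. Unset Printing Implicit Defensive.
Import Order.TTheory GRing.Theory Num.Theory.
Local Open Scope ring_scope.

(* Write A = sum_l (u_l)^m with u_l >= 0. Then F_i is linear in A and, for a
   rank-one tensor, F_i(x) = u_{l,i} (u_l . x)^(m-1). Since m - 1 is even and
   u_{l,i} >= 0, each such term is the square of sqrt(u_{l,i}) (u_l . x)^((m-1)/2). *)

Lemma sum_tupleS (V : nmodType) (T : finType) (k : nat) (F : k.+1.-tuple T -> V) :
  \sum_(t : k.+1.-tuple T) F t = \sum_(j : T) \sum_(t : k.-tuple T) F (cons_tuple j t).
Proof.
rewrite pair_big /=.
rewrite (reindex (fun p : T * k.-tuple T => cons_tuple p.1 p.2)) //=.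
exists (fun t => (thead t, behead_tuple t)) => [[j t] _ | t _] /=.
- by congr pair; apply/val_eqP.
- by apply/val_eqP; case: t => [[|x s] ?].
Qed.

Lemma sum_tuple_prod (S : pzSemiRingType) (T : finType) (k : nat) (c : T -> S) :
  \sum_(t : k.-tuple T) \prod_(j <- t) c j = (\sum_j c j) ^+ k.
Proof.
elim: k => [|k IHk].
  rewrite (eq_bigr (fun _ => 1)) => [|t _]; last by rewrite tuple0 big_nil.
  by rewrite sumr_const card_tuple expn0 expr0.
rewrite sum_tupleS exprS mulr_suml; apply: eq_bigr => j _.
by rewrite -IHk mulr_sumr; apply: eq_bigr => t _; rewrite big_cons.
Qed.

Section Fpoly.

Variables (R : comNzRingType) (n : nat).

Lemma FpolyS (k : nat) (A : tensor R k.+1 n) (i : 'I_n) :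
  Fpoly A i = \sum_(t : k.-tuple 'I_n) A (cons_tuple i t) *: \prod_(j <- t) 'X_j.
Proof.
rewrite /Fpoly big_mkcond sum_tupleS (bigD1 i) //= eqxx.
rewrite [X in _ + X]big1 ?addr0 // => j ji.
by apply: big1 => t _; rewrite /= (negbTE ji).
Qed.

Lemma Fpoly_sum (m r : nat) (A : tensor R m n) (B : 'I_r -> tensor R m n) (i : 'I_n) :
  (forall t, A t = \sum_(l < r) B l t) -> Fpoly A i = \sum_(l < r) Fpoly (B l) i.
Proof.
move=> defA; rewrite /Fpoly exchange_big /=; apply: eq_bigr => t _.
by rewrite defA scaler_suml.
Qed.

Definition linear_form (u : 'I_n -> R) : {mpoly R[n]} := \sum_j (u j)%:MP * 'X_j.

Lemma Fpoly_rank_one (k : nat) (u : 'I_n -> R) (i : 'I_n) :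
  Fpoly (@rank_one R k.+1 n u) i = (u i)%:MP * linear_form u ^+ k.
Proof.
rewrite FpolyS /linear_form -sum_tuple_prod mulr_sumr; apply: eq_bigr => t _.
rewrite /rank_one big_cons big_split /= -rmorph_prod mulrA -mpolyCM.
by rewrite mul_mpolyC.
Qed.

End Fpoly.

Section SumsOfSquares.

Variables (R : comNzRingType) (n : nat).

Lemma is_sos_sqr (p : {mpoly R[n]}) : is_sos (p ^+ 2).
Proof. by exists [:: p]; rewrite big_seq1. Qed.

Lemma is_sos_sum (r : nat) (F : 'I_r -> {mpoly R[n]}) :
  (forall l, is_sos (F l)) -> is_sos (\sum_(l < r) F l).
Proof.
move=> sosF; apply: (big_ind (@is_sos R n)) => // [|p q [s ->] [s' ->]].
- by exists [::]; rewrite big_nil.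
- by exists (s ++ s'); rewrite big_cat.
Qed.

End SumsOfSquares.

Lemma is_sos_nneg_expr_even (R : rcfType) (n k : nat) (c : R) (p : {mpoly R[n]}) :
  0 <= c -> ~~ odd k -> is_sos (c%:MP * p ^+ k).
Proof.
move=> c_ge0 /even_halfK <-.
rewrite -(sqr_sqrtr c_ge0) rmorphXn -muln2 exprM -exprMn.
exact: is_sos_sqr.
Qed.

Theorem theorem4p4 (R : rcfType) (m n : nat) (A : tensor R m n) :
  odd m -> (3 <= m)%N -> (2 <= n)%N ->
  symmetric_tensor A -> completely_positive A -> strongly_sos A.
Proof.
case: m A => [|k] A // odd_m _ _ _ [r [u [_ [u_ge0 defA]]]] i.
rewrite (Fpoly_sum _ defA); apply: is_sos_sum => l.
by rewrite Fpoly_rank_one; apply: is_sos_nneg_expr_even (u_ge0 l i) odd_m.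
Qed.
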